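(* Let $\lambda_1,\lambda_2\in\mathbb{N}$. For all $(k,l,m)$ with $0\le m\le\lambda_1$, $0\le l\le\lambda_2$, $0\le k\le\lambda_2+m-l$, writing $v_{k,l,m}=F_2^k\hat F_3^lF_1^mv_\lambda\in V_\lambda$ (this notation is used for all $k,l,m\in\mathbb{N}$; such vectors may be zero), we have: (i) $K_1v_{k,l,m}=q^{\lambda_1+k-l-2m}v_{k,l,m}$; (ii) $K_2v_{k,l,m}=q^{\lambda_2-2k-l+m}v_{k,l,m}$; (iii) $F_1v_{k,l,m}=a_k(l,m)v_{k,l,m+1}+b_k(l,m)v_{k-1,l+1,m}$; (iv) $E_1v_{k,l,m}=\alpha_k(l,m)v_{k,l,m-1}+\beta_k(l,m)v_{k+1,l-1,m}$; (v) $F_2v_{k,l,m}=v_{k+1,l,m}$; (vi) $E_2v_{k,l,m}=\eta_k(l,m)v_{k-1,l,m}$; where (terms with a zero coefficient are omitted, so negative indices never matter) $a_k(l,m)=\frac{q^{\lambda_2+m+1-k-l}-q^{-\lambda_2-m-1+k+l}}{q^{\lambda_2+m+1-l}-q^{-\lambda_2-m-1+l}}$, $b_k(l,m)=\frac{q^k-q^{-k}}{q^{\lambda_2+m+1-l}-q^{-\lambda_2-m-1+l}}$, $\eta_k(l,m)=\frac{q^k-q^{-k}}{q-q^{-1}}\cdot\frac{q^{1-k+\lambda_2-l+m}-q^{k-1-\lambda_2+l-m}}{q-q^{-1}}$, $\alpha_k(l,m)=\frac{(q^m-q^{-m})(q^{\lambda_1-m+1}-q^{-\lambda_1+m-1})(q^{\lambda_2+m+1}-q^{-\lambda_2-m-1})}{(q-q^{-1})^2(q^{\lambda_2+m-l+1}-q^{-\lambda_2-m+l-1})}$,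 $\beta_k(l,m)=\frac{(q^l-q^{-l})(q^{\lambda_2-l+1}-q^{-\lambda_2+l-1})(q^{\lambda_1+\lambda_2-l+2}-q^{-\lambda_1-\lambda_2+l-2})}{(q-q^{-1})^2(q^{\lambda_2+m-l+1}-q^{-\lambda_2-m+l-1})}$.
   Context: Fix $0<q<1$. $\mathcal{U}_q(\mathfrak{su}(3))$ denotes the unital associative $\mathbb{C}$-algebra generated by $E_i,F_i,K_i^{\pm1}$ ($i=1,2$) subject to: the $K_i^{\pm1}$ pairwise commute, $K_iK_i^{-1}=K_i^{-1}K_i=1$, $K_iE_j=q^{a_{ij}}E_jK_i$, $K_iF_j=q^{-a_{ij}}F_jK_i$, $E_iF_j-F_jE_i=\delta_{ij}\frac{K_i-K_i^{-1}}{q-q^{-1}}$, where $a_{11}=a_{22}=2$, $a_{12}=a_{21}=-1$, and for $i\neq j$ the quantum Serre relations $E_i^2E_j-(q+q^{-1})E_iE_jE_i+E_jE_i^2=0=F_i^2F_j-(q+q^{-1})F_iF_jF_i+F_jF_i^2$. Define $\hat F_3=F_1F_2\frac{qK_2-q^{-1}K_2^{-1}}{q-q^{-1}}-F_2F_1\frac{K_2-K_2^{-1}}{q-q^{-1}}$. For $\lambda_1,\lambda_2\in\mathbb{N}=\{0,1,2,\dots\}$, $V_\lambda$ denotes the finite-dimensional irreducible representation of $\mathcal{U}_q(\mathfrak{su}(3))$ generated by a highest weight vector $v_\lambda$ with $E_iv_\lambda=0$, $K_iv_\lambda=q^{\lambda_i}v_\lambda$ ($i=1,2$). The vectors $F_2^k\hat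 F_3^lF_1^mv_\lambda$ with $0\le m\le\lambda_1$, $0\le l\le\lambda_2$, $0\le k\le\lambda_2+m-l$ form a basis of $V_\lambda$. *)

From HB Require Import structures.
From mathcomp Require Import all_boot all_order all_algebra.
Set Implicit Arguments. Unset Strict Implicit. Unset Printing Implicit Defensive.
Import Order.TTheory GRing.Theory Num.Theory.
Local Open Scope ring_scope.

Definition i1 : 'I_2 := ord0.
Definition i2 : 'I_2 := ord_max.

Definition cartan (i j : 'I_2) : int := if i == j then 2%Z else (-1)%Z.

Definition qb (C : numClosedFieldType) (q : C) (z : int) : C := q ^ z - q ^ (- z).

Definition is_linear_map (C : numClosedFieldType) (V : vectType C) (f : V -> V) : Prop :=
  forall (a : C) (x y : V), f (a *: x + y) = a *: f x + f y.

Definition is_Uq_su3_rep (C : numClosedFieldType) (q : C) (V : vectType C)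
    (E F K Ki : 'I_2 -> V -> V) : Prop :=
  (forall i, [/\ is_linear_map (E i), is_linear_map (F i),
                     is_linear_map (K i) & is_linear_map (Ki i)]) /\
  [/\ (forall i j x, [/\ K i (K j x) = K j (K i x), K i (Ki j x) = Ki j (K i x)
                       & Ki i (Ki j x) = Ki j (Ki i x)]),
      (forall i x, K i (Ki i x) = x /\ Ki i (K i x) = x),
      (forall i j x, K i (E j x) = q ^ cartan i j *: E j (K i x)
                   /\ K i (F j x) = q ^ (- cartan i j) *: F j (K i x)),
      (forall i j x, E i (F j x) - F j (E i x)
                     = if i == j then (q - q^-1)^-1 *: (K i x - Ki i x) else 0)
    & (forall i j x, i != j ->
         E i (E i (E j x)) - (q + q^-1) *: E i (E j (E i x)) + E j (E i (E i x)) = 0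
      /\ F i (F i (F j x)) - (q + q^-1) *: F i (F j (F i x)) + F j (F i (F i x)) = 0)].

Definition rep_irreducible (C : numClosedFieldType) (V : vectType C)
    (E F K Ki : 'I_2 -> V -> V) : Prop :=
  forall U : {vspace V},
    (forall i x, x \in U -> [/\ E i x \in U, F i x \in U, K i x \in U & Ki i x \in U]) ->
    U = 0%VS \/ U = fullv.

Definition F3hat (C : numClosedFieldType) (q : C) (V : vectType C)
    (F K Ki : 'I_2 -> V -> V) (x : V) : V :=
  F i1 (F i2 ((q - q^-1)^-1 *: (q *: K i2 x - q^-1 *: Ki i2 x)))
  - F i2 (F i1 ((q - q^-1)^-1 *: (K i2 x - Ki i2 x))).

Definition vklm (C : numClosedFieldType) (q : C) (V : vectType C)
    (F K Ki : 'I_2 -> V -> V) (v : V) (k l m : nat) : V :=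
  iter k (F i2) (iter l (F3hat q F K Ki) (iter m (F i1) v)).

Section Coeffs.
Variables (C : numClosedFieldType) (q : C) (l1 l2 k l m : nat).
Local Notation Z n := (n%:Z).

Definition coef_a : C :=
  qb q (Z l2 + Z m + 1 - Z k - Z l) / qb q (Z l2 + Z m + 1 - Z l).
Definition coef_b : C :=
  qb q (Z k) / qb q (Z l2 + Z m + 1 - Z l).
Definition coef_eta : C :=
  (qb q (Z k) / (q - q^-1)) * (qb q (1 - Z k + Z l2 - Z l + Z m) / (q - q^-1)).
Definition coef_alpha : C :=
  qb q (Z m) * qb q (Z l1 - Z m + 1) * qb q (Z l2 + Z m + 1)
  / ((q - q^-1) ^+ 2 * qb q (Z l2 + Z m - Z l + 1)).
Definition coef_beta : C :=
  qb q (Z l) * qb q (Z l2 - Z l + 1) * qb q (Z l1 + Z l2 - Z l + 2)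
  / ((q - q^-1) ^+ 2 * qb q (Z l2 + Z m - Z l + 1)).
End Coeffs.

From HB Require Import structures.
From mathcomp Require Import all_boot all_order all_algebra.
From mathcomp Require Import ring zify.
Import Order.TTheory GRing.Theory Num.Theory.
Set Implicit Arguments. Unset Strict Implicit. Unset Printing Implicit Defensive.
Local Open Scope ring_scope.

(* Let [n] = (q^n - q^-n)/(q - q^-1).  All v_{k,l,m} are weight vectors, which
   gives (i) and (ii), and (v) holds by definition.  On a vector of K2-weight
   q^b one has \hat F_3 = [b+1] F1 F2 - [b] F2 F1, so the Serre relations make
   \hat F_3 commute with F1 and make the q-commutator F1 F2 - q F2 F1
   q-commute with F2; pushing F1 through F2^k then gives (iii).  E2 kills
   v_{0,l,m} = \hat F_3^l F1^m v, so (vi) is the U_q(sl_2) formula for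
   E2 F2^k.  Finally E1 commutes with F2, and E1 v_{0,l,m} is computed by
   induction on l: commuting E1 past \hat F_3 and using the F2-Serre relation
   once more, the coefficient of F2 v_{0,l-1,m} satisfies a first-order
   recursion in l whose solution is beta_k(l,m) up to the common denominator. *)

Section LinearMaps.
Variables (C : numClosedFieldType) (V : vectType C).
Implicit Types (f g : V -> V) (x y : V) (a : C).

Lemma lin_mapD f : is_linear_map f -> forall x y, f (x + y) = f x + f y.
Proof. by move=> hf x y; have := hf 1 x y; rewrite !scale1r. Qed.

Lemma lin_map0 f : is_linear_map f -> f 0 = 0.
Proof.
move=> hf; have := hf (-1) 0 0.
by rewrite scaler0 addr0 scaleN1r => h; rewrite {1}h addNr.
Qed.

Lemma lin_mapZ f : is_linear_map f -> forall a x, f (a *: x) = a *: f x.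
Proof. by move=> hf a x; rewrite -[a *: x]addr0 hf (lin_map0 hf) addr0. Qed.

Lemma lin_mapB f : is_linear_map f -> forall x y, f (x - y) = f x - f y.
Proof. by move=> hf x y; rewrite addrC -scaleN1r hf scaleN1r addrC. Qed.

Lemma is_linear_map_iter f n : is_linear_map f -> is_linear_map (iter n f).
Proof. by move=> hf; elim: n => [|n IH] a x y //=; rewrite IH hf. Qed.

Lemma is_linear_map_comp f g :
  is_linear_map f -> is_linear_map g -> is_linear_map (f \o g).
Proof. by move=> hf hg a x y /=; rewrite hg hf. Qed.

Lemma is_linear_map_sub f g :
  is_linear_map f -> is_linear_map g -> is_linear_map (fun x => f x - g x).
Proof. by move=> hf hg a x y; rewrite hf hg scalerBr opprD addrACA. Qed.

Lemma is_linear_map_scale f a : is_linear_map f -> is_linear_map (fun x => a *: f x).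
Proof. by move=> hf b x y; rewrite hf scalerDr !scalerA mulrC. Qed.

End LinearMaps.

Section LinearCombination.
Variables (C : numClosedFieldType) (V : vectType C).
Implicit Types (A B D G : V) (a b d g : C).

Definition lcomb4 A B D G a b d g := a *: A + b *: B + d *: D + g *: G.

Lemma lcomb4_basis (P : V -> V -> V -> V -> Prop) A B D G :
  P (lcomb4 A B D G 1 0 0 0) (lcomb4 A B D G 0 1 0 0)
    (lcomb4 A B D G 0 0 1 0) (lcomb4 A B D G 0 0 0 1) -> P A B D G.
Proof. by rewrite /lcomb4 !scale1r !scale0r !addr0 !add0r. Qed.

Lemma lcomb4_0 A B D G : 0 = lcomb4 A B D G 0 0 0 0.
Proof. by rewrite /lcomb4 !scale0r !addr0. Qed.

Lemma lcomb4D A B D G a b d g a' b' d' g' :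
  lcomb4 A B D G a b d g + lcomb4 A B D G a' b' d' g' =
  lcomb4 A B D G (a + a') (b + b') (d + d') (g + g').
Proof.
by rewrite /lcomb4 !scalerDl addrACA [X in X + _]addrACA [X in X + _ + _]addrACA.
Qed.

Lemma lcomb4Z A B D G a b d g s :
  s *: lcomb4 A B D G a b d g = lcomb4 A B D G (s * a) (s * b) (s * d) (s * g).
Proof. by rewrite /lcomb4 !scalerDr !scalerA. Qed.

Lemma lcomb4N A B D G a b d g :
  - lcomb4 A B D G a b d g = lcomb4 A B D G (- a) (- b) (- d) (- g).
Proof. by rewrite -scaleN1r lcomb4Z !mulN1r. Qed.

Lemma lcomb4_eq A B D G a b d g a' b' d' g' :
  a = a' -> b = b' -> d = d' -> g = g' ->
  lcomb4 A B D G a b d g = lcomb4 A B D G a' b' d' g'.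
Proof. by move=> -> -> -> ->. Qed.

End LinearCombination.

(* [collect A B D G] (or with fewer vectors) reduces an identity between linear
   combinations of A, B, D, G to the identities between their coefficients,
   treating the vectors as independent indeterminates. *)
Ltac collect4 A B D G :=
  rewrite ?scale0r ?scaler0;
  generalize A; let a := fresh "A" in intro a;
  generalize B; let b := fresh "B" in intro b;
  generalize D; let d := fresh "D" in intro d;
  generalize G; let g := fresh "G" in intro g;
  pattern a, b, d, g; apply: lcomb4_basis; cbv beta;
  rewrite ?(lcomb4_0 a b d g);
  repeat rewrite ?lcomb4N ?lcomb4Z ?lcomb4D; apply: lcomb4_eq.

Tactic Notation "collect" constr(A) constr(B) constr(D) constr(G) :=
  collect4 A B D G.
Tactic Notation "collect" constr(A) constr(B) constr(D) :=
  let T := type of A in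
  let g := fresh "G" in pose proof (0 : T) as g; collect4 A B D g.
Tactic Notation "collect" constr(A) constr(B) :=
  let T := type of A in
  let d := fresh "D" in pose proof (0 : T) as d; collect A B d.
Tactic Notation "collect" constr(A) :=
  let T := type of A in
  let b := fresh "B" in pose proof (0 : T) as b; collect A b.

Section Representation.
Variables (C : numClosedFieldType) (q : C) (V : vectType C) (E F K Ki : 'I_2 -> V -> V).
Hypotheses (q_gt0 : 0 < q) (q_lt1 : q < 1) (hrep : is_Uq_su3_rep q E F K Ki).

Local Notation F1 := (F i1).
Local Notation F2 := (F i2).
Local Notation E1 := (E i1).
Local Notation E2 := (E i2).
Local Notation K1 := (K i1).
Local Notation K2 := (K i2).
Local Notation F3 := (F3hat q F K Ki).

Lemma q_neq0 : q != 0. Proof. by rewrite gt_eqF. Qed.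

Lemma q_subV_neq0 : q - q^-1 != 0.
Proof.
rewrite subr_eq0; apply/eqP => qVq.
have /eqP : q ^+ 2 = 1 by rewrite expr2 {2}qVq mulfV ?q_neq0.
rewrite sqrf_eq1 => /orP[] /eqP q1; first by move: q_lt1; rewrite q1 ltxx.
by move: q_gt0; rewrite q1 oppr_gt0 ltr10.
Qed.

Lemma q_mulq_sub1_neq0 : q * q - 1 != 0.
Proof.
apply: contra q_subV_neq0; rewrite subr_eq0 => /eqP qq1.
by rewrite -[q^-1]mul1r -qq1 mulfK ?q_neq0 ?subrr.
Qed.

Lemma qb0 : qb q 0 = 0. Proof. by rewrite /qb oppr0 subrr. Qed.

Lemma qb_neq0 z : 0 < z -> qb q z != 0.
Proof.
case: z => // n; rewrite ltz_nat => n_gt0.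
rewrite /qb -invr_expz subr_eq0; apply/eqP => qn_eqV.
have qn_lt1 : q ^+ n < 1 by rewrite exprn_ilt1 ?ltW // -lt0n.
have : 1 < (q ^+ n)^-1 by rewrite invf_gt1 // exprn_gt0.
by rewrite -[X in _ < X]qn_eqV => /lt_trans/(_ qn_lt1); rewrite ltxx.
Qed.

Definition qnum (z : int) := qb q z / (q - q^-1).

Lemma qnum0 : qnum 0 = 0. Proof. by rewrite /qnum qb0 mul0r. Qed.

Lemma qnum_neq0 z : 0 < z -> qnum z != 0.
Proof. by move=> z_gt0; rewrite mulf_neq0 ?invr_eq0 ?q_subV_neq0 ?qb_neq0. Qed.

Lemma mul2z (z : int) : 2 * z = z + z. Proof. by ring. Qed.

(* Identities between rational functions of q with integer exponents: expand
   every power of q into powers of q^{l1}, q^{l2}, q^k, ... and clear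
   denominators. *)
Ltac qfield :=
  rewrite /qnum /qb ?exprS ?exprnP ?intS ?(@mulrDr int) ?(@mulr1 int) ?mul2z
          ?opprD ?opprK ?(expfzDr _ _ q_neq0) -?invr_expz ?expr1z ?expr0z
          ?(mul1r, mulr1, addr0, add0r, oppr0, subr0, mulr0, mul0r);
  first [done | field; rewrite ?q_neq0 ?q_mulq_sub1_neq0 ?(expfz_neq0 _ q_neq0) //].

Lemma lin_E i : is_linear_map (E i). Proof. by case: hrep => /(_ i) []. Qed.
Lemma lin_F i : is_linear_map (F i). Proof. by case: hrep => /(_ i) []. Qed.
Lemma lin_K i : is_linear_map (K i). Proof. by case: hrep => /(_ i) []. Qed.
Lemma lin_Ki i : is_linear_map (Ki i). Proof. by case: hrep => /(_ i) []. Qed.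

Lemma KiK i x : Ki i (K i x) = x.
Proof. by case: hrep => _ [_ /(_ i x) [] _ ->]. Qed.

Lemma KE i j x : K i (E j x) = q ^ cartan i j *: E j (K i x).
Proof. by case: hrep => _ [_ _ /(_ i j x) [] -> _]. Qed.

Lemma KF i j x : K i (F j x) = q ^ (- cartan i j) *: F j (K i x).
Proof. by case: hrep => _ [_ _ /(_ i j x) [] _ ->]. Qed.

Lemma EF i j x : E i (F j x) - F j (E i x)
                   = if i == j then (q - q^-1)^-1 *: (K i x - Ki i x) else 0.
Proof. by case: hrep => _ [_ _ _ -> _]. Qed.

Lemma F_serre i j x : i != j ->
  F i (F i (F j x)) = (q + q^-1) *: F i (F j (F i x)) - F j (F i (F i x)).
Proof.
case: hrep => _ [_ _ _ _ /(_ i j x) serre] /serre [_ /eqP].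
by rewrite addrAC subr_eq0 => /eqP <-; rewrite addrK.
Qed.

Lemma E1F2 x : E1 (F2 x) = F2 (E1 x).
Proof. by apply/eqP; rewrite -subr_eq0 EF. Qed.

Lemma E2F1 x : E2 (F1 x) = F1 (E2 x).
Proof. by apply/eqP; rewrite -subr_eq0 EF. Qed.

Lemma lin_F3hat : is_linear_map F3.
Proof.
apply: is_linear_map_sub; apply: is_linear_map_comp (lin_F _) _;
  apply: is_linear_map_comp (lin_F _) _; apply: is_linear_map_scale;
  [apply: is_linear_map_sub; apply: is_linear_map_scale | apply: is_linear_map_sub];
  first [exact: lin_K | exact: lin_Ki].
Qed.

Definition weight x (a b : int) := K1 x = q ^ a *: x /\ K2 x = q ^ b *: x.

Lemma Ki_eigen i x (a : int) : K i x = q ^ a *: x -> Ki i x = q ^ (- a) *: x.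
Proof.
move=> Kx; have := KiK i x; rewrite Kx (lin_mapZ (lin_Ki i)) => KiKx.
by rewrite -{2}KiKx scalerA -invr_expz mulVf ?scale1r // expfz_neq0 ?q_neq0.
Qed.

Lemma K_F_eigen i j x c :
  K i x = q ^ c *: x -> K i (F j x) = q ^ (c - cartan i j) *: F j x.
Proof. by move=> Kx; rewrite KF Kx (lin_mapZ (lin_F j)) scalerA -expfzDr ?q_neq0 // addrC. Qed.

Lemma K_E_eigen i j x c :
  K i x = q ^ c *: x -> K i (E j x) = q ^ (c + cartan i j) *: E j x.
Proof. by move=> Kx; rewrite KE Kx (lin_mapZ (lin_E j)) scalerA -expfzDr ?q_neq0 // addrC. Qed.

Lemma weightF1 x a b : weight x a b -> weight (F1 x) (a - 2) (b + 1).
Proof.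
by case=> /(K_F_eigen i1) K1x /(K_F_eigen i1) K2x; split; rewrite ?K1x ?K2x /cartan /= ?opprK.
Qed.

Lemma weightF2 x a b : weight x a b -> weight (F2 x) (a + 1) (b - 2).
Proof.
by case=> /(K_F_eigen i2) K1x /(K_F_eigen i2) K2x; split; rewrite ?K1x ?K2x /cartan /= ?opprK.
Qed.

Lemma weightE1 x a b : weight x a b -> weight (E1 x) (a + 2) (b - 1).
Proof.
by case=> /(K_E_eigen i1) K1x /(K_E_eigen i1) K2x; split; rewrite ?K1x ?K2x /cartan /=.
Qed.

Lemma weight0 a b : weight 0 a b.
Proof. by split; rewrite (lin_map0 (lin_K _)) scaler0. Qed.

Lemma weightB x y a b : weight x a b -> weight y a b -> weight (x - y) a b.
Proof.
by case=> Kx1 Kx2 [Ky1 Ky2]; split; rewrite (lin_mapB (lin_K _)) ?Kx1 ?Kx2 ?Ky1 ?Ky2 scalerBr.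
Qed.

Lemma weightZ x a b s : weight x a b -> weight (s *: x) a b.
Proof. by case=> Kx1 Kx2; split; rewrite (lin_mapZ (lin_K _)) ?Kx1 ?Kx2 !scalerA mulrC. Qed.

Lemma F3hat_weight x a b :
  weight x a b -> F3 x = qnum (b + 1) *: F1 (F2 x) - qnum b *: F2 (F1 x).
Proof.
case=> _ Kx; rewrite /F3hat Kx (Ki_eigen Kx) !scalerA -!scalerBl.
rewrite !(lin_mapZ (lin_F _)) !scalerA; congr (_ *: _ - _ *: _); qfield.
Qed.

Lemma weightF3 x a b : weight x a b -> weight (F3 x) (a - 1) (b - 1).
Proof.
move=> wx; rewrite (F3hat_weight wx); apply: weightB; apply: weightZ.
  have [-> ->] : a - 1 = a + 1 - 2 /\ b - 1 = b - 2 + 1 by split; ring.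
  exact/weightF1/weightF2.
have [-> ->] : a - 1 = a - 2 + 1 /\ b - 1 = b + 1 - 2 by split; ring.
exact/weightF2/weightF1.
Qed.

Lemma weight_iterF1 x a b m :
  weight x a b -> weight (iter m F1 x) (a - 2 * m%:Z) (b + m%:Z).
Proof.
move=> wx; elim: m => [|m IH] /=; first by rewrite mulr0 subr0 addr0.
have [-> ->] : a - 2 * m.+1%:Z = a - 2 * m%:Z - 2 /\ b + m.+1%:Z = b + m%:Z + 1.
  by split; rewrite intS; ring.
exact: weightF1.
Qed.

Lemma weight_iterF2 x a b k :
  weight x a b -> weight (iter k F2 x) (a + k%:Z) (b - 2 * k%:Z).
Proof.
move=> wx; elim: k => [|k IH] /=; first by rewrite mulr0 subr0 addr0.
have [-> ->] : a + k.+1%:Z = a + k%:Z + 1 /\ b - 2 * k.+1%:Z = b - 2 * k%:Z - 2.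
  by split; rewrite intS; ring.
exact: weightF2.
Qed.

Lemma weight_iterF3 x a b l :
  weight x a b -> weight (iter l F3 x) (a - l%:Z) (b - l%:Z).
Proof.
move=> wx; elim: l => [|l IH] /=; first by rewrite !subr0.
have [-> ->] : a - l.+1%:Z = a - l%:Z - 1 /\ b - l.+1%:Z = b - l%:Z - 1.
  by split; rewrite intS; ring.
exact: weightF3.
Qed.

Lemma F1F3hat x a b : weight x a b -> F1 (F3 x) = F3 (F1 x).
Proof.
move=> wx; rewrite (F3hat_weight (weightF1 wx)) (F3hat_weight wx).
rewrite (lin_mapB (lin_F _)) !(lin_mapZ (lin_F _)) F_serre //.
collect (F1 (F2 (F1 x))) (F2 (F1 (F1 x))); qfield.
Qed.

Lemma EF_eigen i y c : K i y = q ^ c *: y -> E i (F i y) = F i (E i y) + qnum c *: y.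
Proof.
move=> Ky; have := EF i i y; rewrite eqxx Ky (Ki_eigen Ky) => /eqP.
by rewrite subr_eq addrC -scalerBl scalerA mulrC => /eqP.
Qed.

Lemma E_iterF i y a k : E i y = 0 -> K i y = q ^ a *: y ->
  E i (iter k (F i) y) = (qnum k%:Z * qnum (a - k%:Z + 1)) *: iter k.-1 (F i) y.
Proof.
move=> Ey Ky; have K_iterF n : K i (iter n (F i) y) = q ^ (a - 2 * n%:Z) *: iter n (F i) y.
  elim: n => [|n IH] /=; first by rewrite Ky mulr0 subr0.
  by rewrite (K_F_eigen _ IH) /cartan eqxx intS; congr (q ^ _ *: _); ring.
elim: k => [|k IH]; first by rewrite /= Ey qnum0 mul0r scale0r.
rewrite iterS (EF_eigen (K_iterF _)); case: k IH => [|k] IH.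
  by rewrite /= Ey (lin_map0 (lin_F _)) add0r; congr (_ *: _); qfield.
rewrite IH (lin_mapZ (lin_F _)) /=.
collect (F i (iter k (F i) y)); qfield.
Qed.

Lemma E2F3hat x a b : weight x a b -> E2 x = 0 -> E2 (F3 x) = 0.
Proof.
move=> wx E2x; rewrite (F3hat_weight wx) (lin_mapB (lin_E _)) !(lin_mapZ (lin_E _)).
rewrite E2F1 (EF_eigen wx.2) (EF_eigen (weightF1 wx).2) E2F1 E2x !(lin_map0 (lin_F _)).
rewrite !add0r (lin_mapZ (lin_F _)); collect (F1 x); qfield.
Qed.

Lemma E1F3hat x a b : weight x a b ->
  qnum b *: E1 (F3 x) =
  qnum (b + 1) *: F3 (E1 x) - F2 (F1 (E1 x)) + (qnum b * qnum (a + b + 1)) *: F2 x.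
Proof.
move=> wx; rewrite (F3hat_weight wx) (F3hat_weight (weightE1 wx)).
rewrite (lin_mapB (lin_E _)) !(lin_mapZ (lin_E _)).
rewrite (EF_eigen (weightF2 wx).1) E1F2 E1F2 (EF_eigen wx.1).
rewrite !(lin_mapD (lin_F _)) !(lin_mapZ (lin_F _)).
collect (F1 (F2 (E1 x))) (F2 (F1 (E1 x))) (F2 x); qfield.
Qed.

Lemma F2F3hat x a b : weight x a b ->
  qnum (b - 1) *: F2 (F3 x) = qnum b *: F3 (F2 x) - F2 (F1 (F2 x)).
Proof.
move=> wx; rewrite (F3hat_weight wx) (F3hat_weight (weightF2 wx)).
rewrite (lin_mapB (lin_F _)) !(lin_mapZ (lin_F _)) F_serre //.
collect (F1 (F2 (F2 x))) (F2 (F1 (F2 x))); qfield.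
Qed.

Definition qcommF y := F1 (F2 y) - q *: F2 (F1 y).

Lemma qcommF_F2 y : qcommF (F2 y) = q^-1 *: F2 (qcommF y).
Proof.
rewrite /qcommF (lin_mapB (lin_F _)) !(lin_mapZ (lin_F _)) F_serre //.
collect (F2 (F1 (F2 y))) (F1 (F2 (F2 y))); qfield.
Qed.

Lemma F1_iterF2 k y : F1 (iter k.+1 F2 y) =
  q ^+ k.+1 *: iter k.+1 F2 (F1 y) + qnum (k%:Z + 1) *: iter k F2 (qcommF y).
Proof.
elim: k y => [|k IH] y.
  by rewrite /= /qcommF; collect (F1 (F2 y)) (F2 (F1 y)); qfield.
rewrite iterSr IH (_ : F1 (F2 y) = qcommF y + q *: F2 (F1 y)); last by rewrite subrK.
rewrite qcommF_F2 (lin_mapD (is_linear_map_iter _ (lin_F _))).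
rewrite !(lin_mapZ (is_linear_map_iter _ (lin_F _))) -!iterSr.
collect (iter k.+1 F2 (qcommF y)) (iter k.+2 F2 (F1 y)); qfield.
Qed.

Lemma qcommF_weight y a b :
  weight y a b -> qnum (b + 1) *: qcommF y = F3 y - q ^ (b + 1) *: F2 (F1 y).
Proof.
by move=> wy; rewrite (F3hat_weight wy) /qcommF; collect (F1 (F2 y)) (F2 (F1 y)); qfield.
Qed.

Lemma F1_iterF2_weight y a b k : weight y a b ->
  qnum (b + 1) *: F1 (iter k F2 y) =
  qnum (b + 1 - k%:Z) *: iter k F2 (F1 y) + qnum k%:Z *: iter k.-1 F2 (F3 y).
Proof.
move=> wy; case: k => [|k]; first by rewrite /=; collect (F1 y) (F3 y); qfield.
have lin_iterF2 := is_linear_map_iter k (lin_F i2).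
have -> : qnum (b + 1) *: F1 (iter k.+1 F2 y) =
    (q ^+ k.+1 * qnum (b + 1)) *: iter k.+1 F2 (F1 y)
    + qnum (k%:Z + 1) *: iter k F2 (F3 y - q ^ (b + 1) *: F2 (F1 y)).
  rewrite F1_iterF2 scalerDr scalerA mulrC; congr (_ + _).
  by rewrite -(qcommF_weight wy) (lin_mapZ lin_iterF2) !scalerA mulrC.
rewrite (lin_mapB lin_iterF2) (lin_mapZ lin_iterF2) -iterSr /=.
collect (F2 (iter k F2 (F1 y))) (iter k F2 (F3 y)); qfield.
Qed.

Lemma qbE z : qb q z = (q - q^-1) * qnum z.
Proof. by rewrite /qnum mulrC divfK ?q_subV_neq0. Qed.

(* z is the vector one \hat F_3-step before x; after substituting E1 x, the
   F3 (F2 z) terms cancel by F2F3hat applied to z. *)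
Lemma E1F3hat_recursion x y z a b (alpha beta beta' : C) :
  0 < b + 1 -> weight x a b -> weight z (a + 1) (b + 1) ->
  alpha *: F1 y = alpha *: x -> beta *: F3 z = beta *: x ->
  qb q (b + 1) *: E1 x = alpha *: y + beta *: F2 z ->
  qnum (b + 1) * beta' = beta * qnum b + qb q (b + 1) * qnum b * qnum (a + b + 1) - alpha ->
  qb q b *: E1 (F3 x) = alpha *: F3 y + beta' *: F2 x.
Proof.
move=> b_gt0 wx wz F1y F3z E1x beta'E; apply: (scalerI (qnum_neq0 b_gt0)).
have F2F1F2z : beta *: F2 (F1 (F2 z)) =
    (beta * qnum (b + 1)) *: F3 (F2 z) - (beta * qnum b) *: F2 x.
  have -> : F2 (F1 (F2 z)) = qnum (b + 1) *: F3 (F2 z) - qnum b *: F2 (F3 z).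
    by have := F2F3hat wz; rewrite addrK => ->; rewrite opprB addrC subrK.
  rewrite scalerBr !scalerA; congr (_ - _).
  by rewrite [_ * qnum b]mulrC -!scalerA -!(lin_mapZ (lin_F _)) F3z.
have -> : qnum (b + 1) *: (qb q b *: E1 (F3 x)) =
    qnum (b + 1) *: F3 (qb q (b + 1) *: E1 x) - F2 (F1 (qb q (b + 1) *: E1 x))
    + (qb q (b + 1) * qnum b * qnum (a + b + 1)) *: F2 x.
  rewrite qbE scalerA mulrA -scalerA (E1F3hat wx) qbE.
  rewrite (lin_mapZ lin_F3hat) !(lin_mapZ (lin_F _)).
  by collect (F3 (E1 x)) (F2 (F1 (E1 x))) (F2 x); ring.
rewrite E1x (lin_mapD lin_F3hat) !(lin_mapZ lin_F3hat) (lin_mapD (lin_F _)).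
rewrite !(lin_mapZ (lin_F _)) F1y (lin_mapD (lin_F _)) !(lin_mapZ (lin_F _)) F2F1F2z.
rewrite [RHS]scalerDr [qnum (b + 1) *: (beta' *: _)]scalerA beta'E.
collect (F3 y) (F3 (F2 z)) (F2 x); ring.
Qed.

Variables (v : V) (l1 l2 : nat).
Hypotheses (E_v : forall i, E i v = 0)
  (K1_v : K1 v = q ^+ l1 *: v) (K2_v : K2 v = q ^+ l2 *: v).

Local Notation w := (vklm q F K Ki v).

Definition v0 l m := iter l F3 (iter m F1 v).

Lemma weight_v0 l m : weight (v0 l m) (l1%:Z - 2 * m%:Z - l%:Z) (l2%:Z + m%:Z - l%:Z).
Proof. exact/weight_iterF3/weight_iterF1. Qed.

Lemma F1_v0 l m : F1 (v0 l m) = v0 l m.+1.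
Proof.
rewrite /v0 iterS; elim: l => [|l IH] //=.
by rewrite (F1F3hat (weight_v0 l m)) IH.
Qed.

Lemma E2_v0 l m : E2 (v0 l m) = 0.
Proof.
elim: l => [|l IH].
  rewrite /v0 /=; elim: m => [|m IH] /=; first exact: E_v.
  by rewrite E2F1 IH (lin_map0 (lin_F _)).
by rewrite /v0 iterS (E2F3hat (weight_v0 l m)).
Qed.

Definition alpha m :=
  qb q m%:Z * qb q (l1%:Z - m%:Z + 1) * qb q (l2%:Z + m%:Z + 1) / (q - q^-1) ^+ 2.
Definition beta l :=
  qb q l%:Z * qb q (l2%:Z - l%:Z + 1) * qb q (l1%:Z + l2%:Z - l%:Z + 2) / (q - q^-1) ^+ 2.

Lemma alpha0 : alpha 0 = 0. Proof. by rewrite /alpha qb0 !mul0r. Qed.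
Lemma beta0 : beta 0 = 0. Proof. by rewrite /beta qb0 !mul0r. Qed.

Lemma beta_recursion l m : let b := l2%:Z + m%:Z - l%:Z in
  qnum (b + 1) * beta l.+1 =
  beta l * qnum b + qb q (b + 1) * qnum b * qnum (l1%:Z - 2 * m%:Z - l%:Z + b + 1) - alpha m.
Proof. by rewrite /beta /alpha; qfield. Qed.

Lemma E1_v0 l m : (l <= l2 + m)%N ->
  qb q (l2%:Z + m%:Z - l%:Z + 1) *: E1 (v0 l m) =
  alpha m *: v0 l m.-1 + beta l *: F2 (v0 l.-1 m).
Proof.
elim: l => [_|l IH lt_l].
  rewrite beta0 scale0r [RHS]addr0 /v0 /=.
  rewrite (E_iterF _ (E_v i1) (K1_v : K1 v = q ^ l1%:Z *: v)) scalerA.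
  by congr (_ *: _); rewrite /alpha; qfield.
have b_gt0 : 0 < l2%:Z + m%:Z - l%:Z + 1 by lia.
have F1y : alpha m *: F1 (v0 l m.-1) = alpha m *: v0 l m.
  by case: m {IH lt_l b_gt0} => [|m]; rewrite ?F1_v0 // alpha0 !scale0r.
have -> : l2%:Z + m%:Z - l.+1%:Z + 1 = l2%:Z + m%:Z - l%:Z by rewrite intS; ring.
(* z stands for v_{0,l-1,m}, replaced by 0 when l = 0 (where beta l = 0) *)
have step z : weight z (l1%:Z - 2 * m%:Z - l%:Z + 1) (l2%:Z + m%:Z - l%:Z + 1) ->
    beta l *: F3 z = beta l *: v0 l m ->
    qb q (l2%:Z + m%:Z - l%:Z + 1) *: E1 (v0 l m) = alpha m *: v0 l m.-1 + beta l *: F2 z ->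
    qb q (l2%:Z + m%:Z - l%:Z) *: E1 (v0 l.+1 m) =
      alpha m *: v0 l.+1 m.-1 + beta l.+1 *: F2 (v0 l m).
  move=> wz F3z E1x.
  exact: E1F3hat_recursion b_gt0 (weight_v0 l m) wz F1y F3z E1x (beta_recursion l m).
move: IH => /(_ (ltnW lt_l)); case: l {lt_l b_gt0 F1y} step => [|l] step IH.
  by apply: step (weight0 _ _) _ _; rewrite beta0 ?scale0r // IH beta0 !scale0r.
apply: step IH; last by [].
have [-> ->] : l1%:Z - 2 * m%:Z - l.+1%:Z + 1 = l1%:Z - 2 * m%:Z - l%:Z /\
               l2%:Z + m%:Z - l.+1%:Z + 1 = l2%:Z + m%:Z - l%:Z by split; rewrite intS; ring.
exact: weight_v0.
Qed.

Lemma weight_vklm k l m :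
  weight (w k l m) (l1%:Z - 2 * m%:Z - l%:Z + k%:Z) (l2%:Z + m%:Z - l%:Z - 2 * k%:Z).
Proof. exact: weight_iterF2 (weight_v0 l m). Qed.

Lemma F1_vklm k l m : (l <= l2 + m)%N ->
  F1 (w k l m) = coef_a q l2 k l m *: w k l m.+1 + coef_b q l2 k l m *: w k.-1 l.+1 m.
Proof.
move=> le_l; have b_gt0 : 0 < l2%:Z + m%:Z - l%:Z + 1 by lia.
have qb_neq0' := qb_neq0 b_gt0.
apply: (scalerI (qnum_neq0 b_gt0)).
rewrite /vklm -/(v0 l m) (F1_iterF2_weight k (weight_v0 l m)) F1_v0 scalerDr !scalerA.
rewrite /coef_a /coef_b (_ : l2%:Z + m%:Z + 1 - l%:Z = l2%:Z + m%:Z - l%:Z + 1); last by ring.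
rewrite (_ : l2%:Z + m%:Z + 1 - k%:Z - l%:Z = l2%:Z + m%:Z - l%:Z + 1 - k%:Z); last by ring.
by congr (_ *: _ + _ *: _); rewrite /qnum; field; rewrite qb_neq0' q_neq0 q_mulq_sub1_neq0.
Qed.

Lemma E1_vklm k l m : (l <= l2 + m)%N ->
  E1 (w k l m) = coef_alpha q l1 l2 l m *: w k l m.-1 + coef_beta q l1 l2 l m *: w k.+1 l.-1 m.
Proof.
move=> le_l; have lin_iterF2 := is_linear_map_iter k (lin_F i2).
have D_neq0 : qb q (l2%:Z + m%:Z - l%:Z + 1) != 0 by apply: qb_neq0; lia.
have E1_iterF2 x : E1 (iter k F2 x) = iter k F2 (E1 x).
  by elim: k {lin_iterF2} => [|k IH] //=; rewrite E1F2 IH.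
rewrite /vklm -/(v0 l m) E1_iterF2 -[E1 (v0 l m)]scale1r -(mulVf D_neq0) -scalerA (E1_v0 le_l).
rewrite (lin_mapZ lin_iterF2) (lin_mapD lin_iterF2) !(lin_mapZ lin_iterF2) -iterSr.
rewrite scalerDr !scalerA /coef_alpha /coef_beta /alpha /beta.
by congr (_ *: _ + _ *: _); field; rewrite D_neq0 q_neq0 q_mulq_sub1_neq0.
Qed.

Lemma E2_vklm k l m : E2 (w k l m) = coef_eta q l2 k l m *: w k.-1 l m.
Proof.
rewrite /vklm -/(v0 l m) (E_iterF k (E2_v0 l m) (weight_v0 l m).2) /coef_eta.
by rewrite (_ : 1 - k%:Z + l2%:Z - l%:Z + m%:Z = l2%:Z + m%:Z - l%:Z - k%:Z + 1); last by ring.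
Qed.

End Representation.

Theorem proposition2p4 (C : numClosedFieldType) (q : C) (hq0 : 0 < q) (hq1 : q < 1)
    (V : vectType C) (E F K Ki : 'I_2 -> V -> V) (l1 l2 : nat) (v : V)
    (hrep : is_Uq_su3_rep q E F K Ki)
    (hirr : rep_irreducible E F K Ki)
    (hv0 : v != 0)
    (hE : forall i, E i v = 0)
    (hK1 : K i1 v = q ^+ l1 *: v) (hK2 : K i2 v = q ^+ l2 *: v)
    (k l m : nat) (hm : (m <= l1)%N) (hl : (l <= l2)%N) (hk : (k <= l2 + m - l)%N) :
  let w := vklm q F K Ki v in
  [/\ K i1 (w k l m) = q ^ (l1%:Z + k%:Z - l%:Z - 2 * m%:Z) *: w k l m
    & K i2 (w k l m) = q ^ (l2%:Z - 2 * k%:Z - l%:Z + m%:Z) *: w k l m] /\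
  [/\       F i1 (w k l m) = coef_a q l2 k l m *: w k l m.+1
                       + coef_b q l2 k l m *: w k.-1 l.+1 m,
      E i1 (w k l m) = coef_alpha q l1 l2 l m *: w k l m.-1
                       + coef_beta q l1 l2 l m *: w k.+1 l.-1 m,
      F i2 (w k l m) = w k.+1 l m
    & E i2 (w k l m) = coef_eta q l2 k l m *: w k.-1 l m].
Proof.
move=> w; have le_l : (l <= l2 + m)%N by rewrite (leq_trans hl) ?leq_addr.
have [K1w K2w] := weight_vklm hq0 hq1 hrep hK1 hK2 k l m.
split; first by split; [rewrite K1w | rewrite K2w]; congr (q ^ _ *: _); ring.
split=> //.
- exact: (F1_vklm hq0 hq1 hrep hK1 hK2 k le_l).
- exact: (E1_vklm hq0 hq1 hrep hE hK1 hK2 k le_l).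
- exact: (E2_vklm hq0 hq1 hrep hE hK1 hK2 k l m).
Qed.
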